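(* Let $q$ be a prime power. Any classical (possibly randomized) algorithm that solves the hidden linear structure problem over $\mathit{GF}(q)$ with error probability at most $\tfrac12$ must make $\Omega(\sqrt q)$ queries to the black box.
   Context: The (classical) hidden linear structure problem over $\mathit{GF}(q)$: one is given a black box computing the map $\mathit{GF}(q)\times\mathit{GF}(q)\to\mathit{GF}(q)\times\mathit{GF}(q)$, $(x,y)\mapsto(x,\pi(y+sx))$, where $\pi$ is an arbitrary (unknown) permutation of $\mathit{GF}(q)$ and $s\in\mathit{GF}(q)$ is unknown. The goal is to determine $s$. Complexity is measured by the number of queries to the black box. *)

From HB Require Import structures.
From mathcomp Require Import all_boot all_order all_algebra all_fingroup all_field.
Set Implicit Arguments. Unset Strict Implicit. Unset Printing Implicit Defensive.
Import Order.TTheory GRing.Theory Num.Theory.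
Local Open Scope ring_scope.

Definition hls_oracle (F : finFieldType) (pi : {perm F}) (s : F) (xy : F * F)
  : F * F := (xy.1, pi (xy.2 + s * xy.1)).

(* A deterministic adaptive query algorithm is given by a "next query"
   function [qf] mapping the list of answers received so far to the next
   query (past queries are determined by past answers).  [history O qf k]
   is the list of the k answers received when run against the black box O. *)
Fixpoint history (F : finFieldType) (O : F * F -> F * F)
    (qf : seq (F * F) -> F * F) (k : nat) : seq (F * F) :=
  match k with
  | 0 => [::]
  | k'.+1 => let h := history O qf k' in rcons h (O (qf h))
  end.

(* Averaging over the random seed, some deterministic algorithm succeeds on at
   least half of the q! q instances (pi, s).  Call a transcript a collision if
   two answers have different x but equal second coordinate.  If a
   collision-free transcript h of k answers is produced by (pi, s), then s avoids
   the at most k^2 slopes (y' - y) / (x - x') of pairs of queries, and any two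
   such s are equally likely: composing pi with a permutation carrying the values
   y + s x of the queries to y + s' x turns the runs producing h for s into those
   for s'.  So, given h, s lies in a fixed set of size m with probability at most
   m / (q - k^2).  A first collision at step k + 1 puts s among the k slopes
   between the new query and the old ones, and a collision-free output is right
   with probability at most 1 / (q - T^2), so the success probability is at most
   (T^2 + 1) / (q - T^2); being at least 1/2, this forces q <= 3 T^2 + 2. *)

From HB Require Import structures.
From mathcomp Require Import all_boot all_order all_algebra all_fingroup all_field.
From mathcomp Require Import zify ring.
Import Order.TTheory GRing.Theory Num.Theory.
Set Implicit Arguments. Unset Strict Implicit. Unset Printing Implicit Defensive.
Local Open Scope ring_scope.

Lemma perm_extend (I : eqType) (T : finType) (f g : I -> T) (l : seq I) :
  {in l &, forall i j, (f i == f j) = (g i == g j)} ->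
  exists t : {perm T}, {in l, forall i, t (f i) = g i}.
Proof.
elim: l => [|i l IHl] fg; first by exists 1%g.
have [|t tl] := IHl; first by move=> j k jl kl; apply: fg; rewrite inE ?jl ?kl orbT.
have fgi j : j \in l -> (f j == f i) = (g j == g i).
  by move=> jl; apply: fg; rewrite !inE ?jl ?eqxx ?orbT.
case: (boolP (has (fun j => f j == f i) l)) => [/hasP [j jl /eqP fji] | /hasPn fi_new].
  exists t => k; rewrite inE => /predU1P [->|]; last exact: tl.
  by rewrite -fji tl //; apply/eqP; rewrite -fgi // fji.
exists (t * tperm (t (f i)) (g i))%g => k; rewrite inE permM => /predU1P [->|kl].
  by rewrite tpermL.
rewrite (tl k kl) tpermD //; first by rewrite -(tl k kl) (inj_eq perm_inj) eq_sym fi_new.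
by rewrite eq_sym -fgi // fi_new.
Qed.

Lemma historyP (F : finFieldType) (O : F * F -> F * F)
    (qf : seq (F * F) -> F * F) (h : seq (F * F)) :
  history O qf (size h) = h <->
  forall i, (i < size h)%N -> nth (0, 0) h i = O (qf (take i h)).
Proof.
elim/last_ind: h => [|h e IHh] /=; first by split.
have take_rcons i x : (i <= size h)%N -> take i (rcons h x) = take i h.
  by move=> ile; rewrite -cats1 takel_cat.
rewrite size_rcons /=; split=> [/rcons_inj [hh <-] i | hP].
  rewrite hh ltnS leq_eqVlt nth_rcons => /predU1P [->|ilt].
    by rewrite ltnn eqxx take_rcons // take_size.
  by rewrite ilt (proj1 IHh hh) // take_rcons // ltnW.
have hh : history O qf (size h) = h.
  apply/IHh => i ilt; have := hP i (ltnW ilt).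
  by rewrite nth_rcons ilt take_rcons // ltnW.
have := hP _ (ltnSn (size h)).
by rewrite nth_rcons ltnn eqxx take_rcons // take_size hh => ->.
Qed.

Lemma leq_rises (b : nat -> bool) n :
  (b n <= b 0 + \sum_(k < n) (~~ b k && b k.+1))%N.
Proof.
elim: n => [|n IHn]; first by rewrite big_ord0 addn0.
rewrite big_ord_recr addnA /=; case: (b n) IHn => IHn /=.
  by rewrite addn0 (leq_trans (leq_b1 _)).
exact: leq_addl.
Qed.

Lemma exists_half_success_seed (R : realFieldType) (Omega I : finType)
    (w : Omega -> R) (P : Omega -> I -> bool) :
  (forall o, 0 <= w o) -> \sum_o w o = 1 ->
  (forall i, 1 / 2 <= \sum_(o | P o i) w o) ->
  exists o, (#|I| <= 2 * \sum_i P o i)%N.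
Proof.
move=> w_ge0 w_sum1 half.
have [o0 _ | Omega0] := pickP (@predT Omega); last first.
  by move: w_sum1; rewrite big1 => [/esym/eqP|o _]; [rewrite oner_eq0 | have := Omega0 o].
have [o omax] := bigop.eq_bigmax (fun o => \sum_i P o i)%N
                    (introT card_gt0P (ex_intro _ o0 isT)).
exists o; rewrite -(ler_nat R) natrM mulrC -ler_pdivrMr ?ltr0n //.
have -> : #|I|%:R / 2 = \sum_(i : I) (1 / 2 : R) by rewrite sumr_const mulrnAl.
apply: le_trans (ler_sum _ (fun i _ => half i)) _.
rewrite (eq_bigr (fun i => \sum_o w o * (P o i)%:R)); last first.
  move=> i _; rewrite big_mkcond /=; apply: eq_bigr => o' _.
  by case: (P o' i); rewrite ?mulr1 ?mulr0.
rewrite exchange_big /= (@le_trans _ _ (\sum_o' w o' * (\sum_i P o i)%:R)) //.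
  apply: ler_sum => o' _; rewrite -mulr_sumr -natr_sum ler_wpM2l // ler_nat -omax.
  exact: leq_bigmax.
by rewrite -mulr_suml w_sum1 mul1r.
Qed.

Section Shear.
Variable F : fieldType.

Definition shear (s : F) (xy : F * F) := xy.2 + s * xy.1.

Definition slope (a b : F * F) := (b.2 - a.2) / (a.1 - b.1).

Lemma shear_eq_slope s a b : a.1 != b.1 ->
  (shear s a == shear s b) = (s == slope a b).
Proof.
move=> dx; have dx0 : a.1 - b.1 != 0 by rewrite subr_eq0.
have -> : (s == slope a b) = ((shear s a - shear s b) / (a.1 - b.1) == 0).
  by rewrite -subr_eq0 /shear /slope; congr (_ == 0); field.
by rewrite mulf_eq0 invr_eq0 (negbTE dx0) orbF subr_eq0.
Qed.

Lemma shear_eq_off_slope s a b : (a.1 != b.1 -> s != slope a b) ->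
  (shear s a == shear s b) = (a == b).
Proof.
case: (eqVneq a.1 b.1) => [dx0 _ | dx0 /(_ isT) /negbTE sab]; last first.
  by rewrite shear_eq_slope // sab; apply/esym; apply: contraNF dx0 => /eqP ->.
case: a b dx0 => [a1 a2] [b1 b2] /= ->.
by rewrite /shear (inj_eq (addIr _)) xpair_eqE eqxx.
Qed.

End Shear.

Section HiddenLinearStructure.
Variables (F : finFieldType) (qf : seq (F * F) -> F * F).

Definition run (pi : {perm F}) (s : F) := history (hls_oracle pi s) qf.

Definition query (h : seq (F * F)) i := qf (take i h).

Definition nruns (h : seq (F * F)) (s : F) :=
  (\sum_(pi : {perm F}) (run pi s (size h) == h))%N.

Definition collision (h : seq (F * F)) :=
  has (fun a => has (fun b => (a.1 != b.1) && (a.2 == b.2)) h) h.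

Definition slopes (h : seq (F * F)) : {set F} :=
  [set slope (query h ij.1) (query h ij.2) | ij : 'I_(size h) * 'I_(size h)
     & (query h ij.1).1 != (query h ij.2).1].

Definition new_slopes (h : seq (F * F)) : {set F} :=
  [set slope (qf h) (query h j) | j : 'I_(size h) & (qf h).1 != (query h j).1].

Lemma size_run pi s k : size (run pi s k) = k.
Proof. by elim: k => //= k IHk; rewrite size_rcons IHk. Qed.

Lemma runP pi s h : run pi s (size h) = h <->
  forall i, (i < size h)%N -> nth (0, 0) h i = hls_oracle pi s (query h i).
Proof. exact: historyP. Qed.

Lemma card_slopes h : (#|slopes h| <= size h * size h)%N.
Proof.
rewrite (leq_trans (leq_imset_card _ _)) // (leq_trans (max_card _)) //.
by rewrite card_prod card_ord.
Qed.

Lemma card_new_slopes h : (#|new_slopes h| <= size h)%N.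
Proof.
by rewrite (leq_trans (leq_imset_card _ _)) // (leq_trans (max_card _)) // card_ord.
Qed.

Lemma shear_query_off_slopes h s (i j : 'I_(size h)) : s \notin slopes h ->
  (shear s (query h i) == shear s (query h j)) = (query h i == query h j).
Proof.
move=> sS; apply: shear_eq_off_slope => dx; apply: contraNneq sS => ->.
by apply/imsetP; exists (i, j); rewrite ?inE.
Qed.

Lemma nruns_le h s s' : s \notin slopes h -> s' \notin slopes h ->
  (nruns h s <= nruns h s')%N.
Proof.
move=> sS s'S.
have [|t tE] := perm_extend (f := fun i : 'I_(size h) => shear s (query h i))
                    (g := fun i => shear s' (query h i)) (l := enum 'I_(size h)).
  by move=> i j _ _; rewrite !shear_query_off_slopes.
rewrite /nruns (reindex_inj (mulgI t)); apply: leq_sum => pi _.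
case: eqP => // /runP runh; rewrite lt0b; apply/eqP/runP => i ilt.
by rewrite runh // /hls_oracle permM (tE (Ordinal ilt)) ?mem_enum.
Qed.

Lemma nruns_eq h s s' : s \notin slopes h -> s' \notin slopes h ->
  nruns h s = nruns h s'.
Proof. by move=> sS s'S; apply/anti_leq; rewrite !nruns_le. Qed.

Lemma nruns_slope h s : ~~ collision h -> s \in slopes h -> nruns h s = 0%N.
Proof.
move=> hfree /imsetP [[i j]]; rewrite inE /= => dx ->; rewrite /nruns big1 // => pi _.
case: eqP => // /runP runh; case/negP: hfree.
apply/hasP; exists (nth (0, 0) h i); first exact: mem_nth.
apply/hasP; exists (nth (0, 0) h j); first exact: mem_nth.
rewrite !runh //= dx /=; apply/eqP; congr (pi _); apply/eqP.
by rewrite shear_eq_slope.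
Qed.

Lemma nruns_posterior h (S : {set F}) : ~~ collision h ->
  ((#|F| - size h * size h) * \sum_(s in S) nruns h s
     <= #|S| * \sum_s nruns h s)%N.
Proof.
move=> hfree; case: (pickP [pred s | s \notin slopes h]) => [s0 s0S | all_slopes].
  have nruns_max s : (nruns h s <= nruns h s0)%N.
    case: (boolP (s \in slopes h)) => sS; first by rewrite nruns_slope.
    by rewrite (nruns_eq sS s0S).
  have many_free : (#|F| - size h * size h <= #|~: slopes h|)%N.
    by rewrite -(cardsC (slopes h)); have := card_slopes h; lia.
  have free_sum : (#|~: slopes h| * nruns h s0 <= \sum_s nruns h s)%N.
    rewrite -sum_nat_const big_mkcond /=; apply: leq_sum => s _.
    by case: ifP => //; rewrite inE => sS; rewrite (nruns_eq s0S sS).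
  have S_sum : (\sum_(s in S) nruns h s <= #|S| * nruns h s0)%N.
    by rewrite -sum_nat_const; apply: leq_sum => s _; exact: nruns_max.
  apply: leq_trans (leq_mul (leqnn _) S_sum) _.
  by rewrite mulnCA leq_mul2l (leq_trans (leq_mul many_free (leqnn _)) free_sum) orbT.
have : (#|F| <= size h * size h)%N.
  apply: leq_trans (card_slopes h); apply/subset_leq_card/subsetP => s _.
  exact/negbFE/all_slopes.
by rewrite -subn_eq0 => /eqP ->.
Qed.

Lemma sum_run_by_history k (g : seq (F * F) -> F -> nat) :
  (\sum_(pi : {perm F}) \sum_s g (run pi s k) s
     = \sum_(h : k.-tuple (F * F)) \sum_s nruns h s * g h s)%N.
Proof.
transitivity (\sum_(pi : {perm F}) \sum_s \sum_(h : k.-tuple (F * F))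
                (run pi s k == h) * g h s)%N.
  apply: eq_bigr => pi _; apply: eq_bigr => s _.
  rewrite (bigD1 (Tuple (introT eqP (size_run pi s k)))) //= eqxx mul1n big1 ?addn0 //.
  move=> h hrun; case: eqP => // runh; case/eqP: hrun.
  by apply: val_inj; rewrite /= runh.
rewrite exchange_big; under eq_bigr do rewrite exchange_big.
rewrite exchange_big; apply: eq_bigr => h _; apply: eq_bigr => s _.
by rewrite /nruns size_tuple big_distrl.
Qed.

Lemma sum_nruns k :
  (\sum_(h : k.-tuple (F * F)) \sum_s nruns h s = #|F| * #|{perm F}|)%N.
Proof.
transitivity (\sum_(pi : {perm F}) \sum_(s : F) 1)%N; last first.
  by under eq_bigr do rewrite sum_nat_const; rewrite sum_nat_const muln1 mulnC.
rewrite (sum_run_by_history k (fun _ _ => 1%N)).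
by apply: eq_bigr => h _; apply: eq_bigr => s _; rewrite muln1.
Qed.

Lemma sum_collision_free_in k (S : seq (F * F) -> {set F}) m :
  (forall h : k.-tuple (F * F), #|S h| <= m)%N ->
  ((#|F| - k * k) * \sum_(pi : {perm F}) \sum_s
      (~~ collision (run pi s k) && (s \in S (run pi s k)))
    <= m * (#|F| * #|{perm F}|))%N.
Proof.
move=> card_S.
rewrite (sum_run_by_history k (fun h s => ~~ collision h && (s \in S h))).
rewrite -(sum_nruns k) !big_distrr /=; apply: leq_sum => h _.
case: (boolP (collision h)) => [_ | hfree].
  by rewrite big1 ?muln0 // => s _; rewrite muln0.
rewrite (eq_bigr (fun s => if s \in S h then nruns h s else 0%N)) -?big_mkcond;
  last first.
  by move=> s _; case: (s \in S h); rewrite ?muln1 ?muln0.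
have := nruns_posterior (S h) hfree; rewrite size_tuple => /leq_trans; apply.
by rewrite leq_mul2r card_S orbT.
Qed.

Lemma collision_rcons h e : ~~ collision h -> collision (rcons h e) ->
  exists2 a, a \in h & (a.1 != e.1) && (a.2 == e.2).
Proof.
move=> hfree; rewrite /collision has_rcons => /orP [|].
  rewrite has_rcons eqxx /= => /hasP [a ah /andP [dx dz]].
  by exists a; rewrite // eq_sym dx eq_sym dz.
move=> /hasP [a ah]; rewrite has_rcons => /orP [ae|]; first by exists a.
by move=> ha; case/negP: hfree; apply/hasP; exists a.
Qed.

Lemma collision_step pi s k : ~~ collision (run pi s k) ->
  collision (run pi s k.+1) -> s \in new_slopes (run pi s k).
Proof.
rewrite [run _ _ k.+1]/run /= -/(run pi s k); set h := run pi s k.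
move=> hfree /(collision_rcons hfree) [a ah /andP [dx dz]].
have [j jlt aE] := nthP (0, 0) ah.
have runh : run pi s (size h) = h by rewrite size_run.
move: dx dz; rewrite -aE (proj1 (runP _ _ _) runh j jlt) /= => dx /eqP /perm_inj dz.
rewrite eq_sym in dx; apply/imsetP; exists (Ordinal jlt); first by rewrite inE.
by apply/eqP; rewrite -shear_eq_slope //; apply/eqP; rewrite /shear dz.
Qed.

Lemma success_le_collisions (out : seq (F * F) -> F) T pi s :
  ((out (run pi s T) == s) <=
     \sum_(k < T) (~~ collision (run pi s k) && (s \in new_slopes (run pi s k)))
     + (~~ collision (run pi s T) && (s \in [set out (run pi s T)])))%N.
Proof.
case: (boolP (collision (run pi s T))) => [hcoll | hfree]; last first.
  by rewrite in_set1 eq_sym leq_addl.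
apply: leq_trans (leq_b1 _) _; apply: leq_trans (leq_addr _ _).
have := leq_rises (fun k => collision (run pi s k)) T; rewrite hcoll /=.
move/leq_trans; apply; apply: leq_sum => k _.
case: (boolP (collision (run pi s k))) => //= hfree.
by case: (boolP (collision _)) => // /(collision_step hfree) ->.
Qed.

Lemma success_count_bound (out : seq (F * F) -> F) T :
  ((#|F| - T * T) * \sum_(pi : {perm F}) \sum_s (out (run pi s T) == s)
     <= (T * T + 1) * (#|F| * #|{perm F}|))%N.
Proof.
set Q := (#|F| * #|{perm F}|)%N.
set first_coll := fun pi s k =>
  ~~ collision (run pi s k) && (s \in new_slopes (run pi s k)).
set lucky := fun pi s => ~~ collision (run pi s T) && (s \in [set out (run pi s T)]).
have succ_le : (\sum_(pi : {perm F}) \sum_s (out (run pi s T) == s) <=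
    \sum_(pi : {perm F}) \sum_s (\sum_(k < T) first_coll pi s k + lucky pi s))%N.
  by apply: leq_sum => pi _; apply: leq_sum => s _; exact: success_le_collisions.
apply: leq_trans (leq_mul (leqnn _) succ_le) _.
under eq_bigr do rewrite big_split /=.
rewrite big_split /= mulnDr mulnDl leq_add //; last first.
  by apply: (@sum_collision_free_in T (fun h => [set out h])) => h; rewrite cards1.
under eq_bigr do rewrite exchange_big /=.
rewrite exchange_big /= big_distrr /=.
apply: (@leq_trans (\sum_(k < T) k * Q)%N).
  apply: leq_sum => k _.
  apply: (@leq_trans ((#|F| - k * k) * \sum_(pi : {perm F}) \sum_s first_coll pi s k)).
    by rewrite leq_mul2r leq_sub2l ?orbT // leq_mul // ltnW.
  apply: (@sum_collision_free_in k new_slopes) => h.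
  by rewrite -{2}(size_tuple h) card_new_slopes.
apply: (@leq_trans (\sum_(k < T) T * Q)%N).
  by apply: leq_sum => k _; rewrite leq_mul2r ltnW ?orbT.
by rewrite sum_nat_const card_ord mulnA.
Qed.

End HiddenLinearStructure.

Lemma sqrt_bound_of_counts (q T n M : nat) : (3 <= q)%N -> (0 < M)%N ->
  ((q - T * T) * n <= (T * T + 1) * (q * M))%N -> (q * M <= 2 * n)%N ->
  (q <= 9 * T ^ 2)%N.
Proof.
move=> q_ge3 M_gt0 count half.
have : ((q - T * T) * (q * M) <= (2 * (T * T + 1)) * (q * M))%N.
  apply: leq_trans (leq_mul (leqnn _) half) _.
  by rewrite mulnCA -mulnA leq_mul2l count orbT.
rewrite leq_pmul2r ?muln_gt0 ?M_gt0 ?andbT; last by apply: leq_trans q_ge3.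
by nia.
Qed.

Theorem theorem3 :
  exists c : rat, 0 < c /\
  exists N : nat, forall (F : finFieldType), (N <= #|F|)%N ->
  forall (R : realFieldType) (Omega : finType) (w : Omega -> R) (T : nat)
         (qf : Omega -> seq (F * F) -> F * F)
         (out : Omega -> seq (F * F) -> F),
    (forall o, 0 <= w o) ->
    \sum_(o : Omega) w o = 1 ->
    (forall (pi : {perm F}) (s : F),
        1 / 2 <= \sum_(o : Omega | out o (history (hls_oracle pi s) (qf o) T) == s) w o) ->
    c ^+ 2 * (#|F|)%:R <= (T ^ 2)%:R.
Proof.
exists (1 / 3); split => //.
exists 3%N => F F_ge3 R Omega w T qf out w_ge0 w_sum1 success.
pose succeeds o (i : {perm F} * F) := out o (run (qf o) i.1 i.2 T) == i.2.
have [o half] := exists_half_success_seed w_ge0 w_sum1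
                   (P := succeeds) (fun i => success i.1 i.2).
rewrite card_prod mulnC -(pair_bigA _ (fun pi s => (succeeds o (pi, s) : nat))) in half.
have perm_gt0 : (0 < #|{perm F}|)%N by apply/card_gt0P; exists 1%g.
have := sqrt_bound_of_counts F_ge3 perm_gt0
          (success_count_bound (qf o) (out o) T) half.
have c2_ge0 : 0 <= (1 / 3 : rat) ^+ 2 by [].
rewrite -(ler_nat rat) natrM => /(ler_wpM2l c2_ge0) /le_trans; apply.
by rewrite mulrA (_ : (1 / 3 : rat) ^+ 2 * 9%:R = 1) ?mul1r.
Qed.
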